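(* For each $k\ge0$ and each index $\alpha$, let $$\mathcal G_{k,\alpha}:=\Big\langle\mathcal O^{(k)}_\alpha\exp\Big(\sum_\beta\lambda^\beta_0\mathcal O_\beta\Big)\Big\rangle_0\in\mathbb C[[\lambda^\alpha_0]].$$ Then the current observables $\oint_C\mathscr J^{(1)}_{\mathcal G_{k,\alpha}}$ mutually commute with respect to $\{-,-\}_C$: $$\Big\{\oint_C\mathscr J^{(1)}_{\mathcal G_{k,\alpha}},\oint_C\mathscr J^{(1)}_{\mathcal G_{m,\beta}}\Big\}_C=0\quad\text{for all }k,m\ge0\text{ and all }\alpha,\beta.$$
   Context: Genus zero data: $H$ finite-dimensional purely even complex vector space with basis $\{\mathcal O_\alpha\}$, distinguished $P=\mathcal O_1$, $\mathcal O^{(k)}_\alpha=t^k\mathcal O_\alpha$ ($t$ formal); symmetric multilinear genus zero correlators $\langle\mathcal O^{(k_1)}_{\alpha_1}\cdots\mathcal O^{(k_n)}_{\alpha_n}\rangle_0\in\mathbb C$ vanishing for $n<3$, with $g_{\alpha\beta}=\langle\mathcal O_\alpha\mathcal O_\beta P\rangle_0$ nondegenerate (inverse $g^{\alpha\beta}$, used to raise indices: $\mathcal O^{(k)\alpha}=\sum_\beta g^{\alpha\beta}\mathcal O^{(k)}_\beta$), satisfying the genus zero topological recursion relation $\langle\langle\mathcal O^{(i+1)}_\alpha\mathcal O^{(j)}_\beta\mathcal O^{(k)}_\gamma\rangle\rangle_0=\sum_\sigma\langle\langle\mathcal O^{(i)}_\alpha\mathcal O^{(0)\sigma}\rangle\rangle_0\langle\langle\mathcal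 O^{(0)}_\sigma\mathcal O^{(j)}_\beta\mathcal O^{(k)}_\gamma\rangle\rangle_0$, where $\langle\langle\cdots\rangle\rangle_0(\mathbf b)=\langle\cdots e^{\sum b^\alpha_k\mathcal O^{(k)}_\alpha}\rangle_0$ is a formal power series in coordinates $b^\alpha_k$. In $\mathcal G_{k,\alpha}$ the exponential is expanded and the correlator applied multilinearly. Setting on $\mathbb C^\times=\mathbb C/(z\sim z+1)$ with form $dz$: fields $\mathcal E^H=(\mathrm{PV}(\mathbb C^\times)\otimes H)[[t]]$ ($t$ of degree 2, $\mathrm{PV}^{i,j}=\Omega^{0,j}(\wedge^iT^{1,0})$ in degree $i+j$), $\mu=\sum(\lambda^\alpha_k\otimes\mathcal O_\alpha t^k+\rho^\alpha_k\partial_z\otimes\mathcal O_\alpha t^k)$, $\lambda^\alpha_k,\rho^\alpha_k\in\Omega^{0,\bullet}(\mathbb C^\times)$. Trace $\mathrm{Tr}(\mu)=\int(\mu\vdash dz)\wedge dz$; BV kernel $K_0=\sum_\alpha(\mathcal O^\alpha\otimes\mathcal O_\alpha)\partial_z\delta(z-w)(d\bar z-d\bar w)$. $\mathbb C[[\partial_z^m\lambda^\alpha_k,\partial_z^m\rho^\alpha_k]]$: formal power series in even $\partial_z^m\lambda^\alpha_k$ and odd $\partial_z^m\rho^\alpha_k$, with derivation $\partial_z$ raising $m$. For such $\mathcal L$, $\mathscr J_{\mathcal L}=dz\,\mathcal L(\partial_z^m\lambda^\alpha_k,\partial_z^m\rho^\alpha_k)$ (an $\Omega^{\bullet,\bullet}(\mathbb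 C^\times)$-valued function on fields obtained by substitution), with 1-form and 2-form parts $\mathscr J^{(1)}_{\mathcal L},\mathscr J^{(2)}_{\mathcal L}$; $C=\{z\in[0,1]\}$. The bracket is $\{\oint_C\mathscr J^{(1)}_{\mathcal L_1},\oint_C\mathscr J^{(1)}_{\mathcal L_2}\}_C:=\{\int_{\mathbb C^\times}\mathscr J^{(2)}_{\mathcal L_1},\oint_C\mathscr J^{(1)}_{\mathcal L_2}\}_{BV}$, where $\{S,\mathcal O\}_{BV}$ is the derivative of the observable $\mathcal O$ along the field transformation obtained by contracting $K_0$ with the functional derivative of the local functional $S$; concretely it equals $\oint_C\mathscr J^{(1)}_{[\mathcal L_1,\mathcal L_2]}$ with $[\mathcal L_1,\mathcal L_2]=\sum_{\alpha,\beta,k,m}\{(-\partial_z)^k\frac{\partial\mathcal L_1}{\partial(\partial_z^k\lambda^\alpha_0)}\}g^{\alpha\beta}\partial_z\{(-\partial_z)^m\frac{\partial\mathcal L_2}{\partial(\partial_z^m\lambda^\beta_0)}\}$. *)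

From mathcomp Require Import all_boot all_order all_algebra.
From mathcomp Require Import complex.
From mathcomp Require Import reals.
Set Implicit Arguments. Unset Strict Implicit. Unset Printing Implicit Defensive.
Import GRing.Theory Num.Theory.
Local Open Scope ring_scope.

(* Basis of H: O_a, a : 'I_n.+1, with P = O_1 = index ord0.            *)
(* An insertion (a, k) stands for the basis element O^{(k)}_a = t^k O_a.*)
(* By (symmetric) multilinearity the correlators are determined by     *)
(* their values on lists of basis insertions: corr s.                  *)

Definition ins (n : nat) := ('I_n.+1 * nat)%type.

Section Data.
Variables (K : fieldType) (n : nat).
Implicit Types (corr : seq (ins n) -> K).

Definition corr_symmetric corr :=
  forall s t : seq (ins n), perm_eq s t -> corr s = corr t.

Definition corr_vanish_lt3 corr :=
  forall s : seq (ins n), (size s < 3)%N -> corr s = 0.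

Definition metric corr : 'M[K]_n.+1 :=
  \matrix_(a, b) corr [:: (a, 0%N); (b, 0%N); (ord0, 0%N)].

Definition metric_nondeg corr := metric corr \in unitmx.

Definition metric_inv corr : 'M[K]_n.+1 := invmx (metric corr).

(* Genus zero TRR, as an identity of formal power series in the b^a_k,
   written coefficientwise: the Taylor coefficient d^L/db^L at b = 0 of
   <<X>>_0 is <X L>_0, and a product of two series has the Leibniz
   coefficient (sum over all splittings of the list L of insertions). *)
Definition TRR corr :=
  forall (a b c : 'I_n.+1) (i j k : nat) (L : seq (ins n)),
    corr [:: (a, i.+1), (b, j), (c, k) & L] =
    \sum_(sg < n.+1) \sum_(tau < n.+1) metric_inv corr sg tau *
      \sum_(m : (size L).-tuple bool)
        corr [:: (a, i), (tau, 0%N) & mask m L] *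
        corr [:: (sg, 0%N), (b, j), (c, k) & mask (map negb m) L].

Definition genus_zero_data corr :=
  [/\ corr_symmetric corr, corr_vanish_lt3 corr, metric_nondeg corr & TRR corr].

End Data.

(* A jet variable d_z^m lambda^a_k is the triple (a, k, m).            *)
(* A formal power series F in (possibly infinitely many) commuting     *)
(* variables over a field of characteristic 0 is encoded by its Taylor *)
(* coefficients: F s = (d/dx_{s_1} ... d/dx_{s_r} F)(0) for every list *)
(* s of variables, i.e. F = sum over multisets s of F s * x^s / s!.    *)
(* Such a coefficient function must be symmetric.                       *)

Definition jvar (n : nat) := ('I_n.+1 * nat * nat)%type.
Definition jv_ind n (v : jvar n) : 'I_n.+1 := v.1.1.
Definition jv_desc n (v : jvar n) : nat := v.1.2.
Definition jv_jet n (v : jvar n) : nat := v.2.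

Section Series.
Variables (K : fieldType) (n : nat).

Definition pseries := seq (jvar n) -> K.

Definition ps_symmetric (F : pseries) :=
  forall s t, perm_eq s t -> F s = F t.

Definition ps_add (F G : pseries) : pseries := fun s => F s + G s.
Definition ps_opp (F : pseries) : pseries := fun s => - F s.
Definition ps_scale (c : K) (F : pseries) : pseries := fun s => c * F s.
Definition ps_zero : pseries := fun _ => 0.

(* product: Leibniz rule for Taylor coefficients *)
Definition ps_mul (F G : pseries) : pseries := fun s =>
  \sum_(m : (size s).-tuple bool) F (mask m s) * G (mask (map negb m) s).

Definition ps_pd (v : jvar n) (F : pseries) : pseries := fun s => F (v :: s).

Definition rem_at (i : nat) (s : seq (jvar n)) := take i s ++ drop i.+1 s.

(* the derivation d_z : d_z (d_z^m lambda^a_k) = d_z^{m+1} lambda^a_k,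
   i.e. d_z F = sum_v x_{v+} dF/dx_v; on Taylor coefficients:
   (d_z F)(s) = sum over positions i of s holding a variable of jet order
   m+1 >= 1 of F((a,k,m) :: s with position i removed). *)
Definition ps_dz (F : pseries) : pseries := fun s =>
  \sum_(i < size s)
    let v := nth (ord0, 0%N, 0%N) s i in
    if (0 < jv_jet v)%N
    then F ((jv_ind v, jv_desc v, (jv_jet v).-1) :: rem_at i s)
    else 0.

Definition jweight (s : seq (jvar n)) : nat := \sum_(v <- s) jv_jet v.

(* variational derivative  sum_k (-d_z)^k dF/d(d_z^k lambda^a_0).
   The sum over k is a formal infinite sum; (-d_z)^k G has only monomials
   of jet weight >= k, so the coefficient at s only receives contributions
   from k <= jweight s, and the truncation below is exact. *)
Definition ps_vard (a : 'I_n.+1) (F : pseries) : pseries := fun s =>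
  \sum_(k < (jweight s).+1)
     iter k (fun X => ps_opp (ps_dz X)) (ps_pd (a, 0%N, nat_of_ord k) F) s.

Definition bracket (ginv : 'M[K]_n.+1) (L1 L2 : pseries) : pseries := fun s =>
  \sum_(a < n.+1) \sum_(b < n.+1)
     ginv a b * ps_mul (ps_vard a L1) (ps_dz (ps_vard b L2)) s.

(* The current observable  \oint_C J^{(1)}_L  vanishes: L is a total
   d_z-derivative in the power series ring. *)
Definition oint_current_zero (L : pseries) :=
  exists F : pseries, ps_symmetric F /\ ps_dz F = L.

(* {oint J_{L1}, oint J_{L2}}_C = oint J_{[L1,L2]} *)
Definition current_bracket_zero (ginv : 'M[K]_n.+1) (L1 L2 : pseries) :=
  oint_current_zero (bracket ginv L1 L2).

(* G_{k,a} = < O^{(k)}_a exp(sum_b lambda^b_0 O_b) >_0 in C[[lambda^a_0]]: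
   Taylor coefficient at lambda^{b_1}_0 ... lambda^{b_r}_0 is
   < O^{(k)}_a O_{b_1} ... O_{b_r} >_0, and 0 at any monomial involving a
   variable other than the lambda^b_0 = d_z^0 lambda^b_0. *)
Definition Gser (corr : seq (ins n) -> K) (k : nat) (a : 'I_n.+1) : pseries :=
  fun s =>
    if all (fun v => (jv_desc v == 0%N) && (jv_jet v == 0%N)) s
    then corr ((a, k) :: map (fun v => (jv_ind v, 0%N)) s)
    else 0.

End Series.

From mathcomp Require Import all_boot all_order all_algebra.
From mathcomp Require Import complex.
From mathcomp Require Import reals.
From mathcomp Require Import boolp.
Set Implicit Arguments. Unset Strict Implicit. Unset Printing Implicit Defensive.
Import GRing.Theory.
Local Open Scope ring_scope.

(* G_{k,a} depends only on the variables lambda^c_0, so its variational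
   derivatives are plain partial derivatives, and by the chain rule
   d_z (dG_{m,b}/dlambda^b_0) = sum_c (d_z lambda^c_0) d^2G_{m,b}/dlambda^c_0 dlambda^b_0.
   The bracket is therefore sum_c (d_z lambda^c_0) X_c with
   X_c = sum_{a,b} dG_{k,a}/dlambda^a_0 g^{ab} d^2G_{m,b}/dlambda^c_0 dlambda^b_0,
   and the TRR identifies X_c with d/dlambda^c_0 << O^(k+1)_a O^(m)_b >>_0.
   Another application of the chain rule shows that the bracket is the total
   derivative d_z << O^(k+1)_a O^(m)_b >>_0, whose current vanishes. *)

Lemma sum_tupleS (K : nmodType) N (f : N.+1.-tuple bool -> K) :
  \sum_(m : N.+1.-tuple bool) f m =
  \sum_(m : N.-tuple bool) (f (cons_tuple true m) + f (cons_tuple false m)).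
Proof.
have -> : \sum_(m : N.-tuple bool) (f (cons_tuple true m) + f (cons_tuple false m))
   = \sum_(p : bool * N.-tuple bool) f (cons_tuple p.1 p.2).
  rewrite -(pair_big xpredT xpredT (fun b m => f (cons_tuple b m))) /=.
  by rewrite exchange_big /=; apply: eq_bigr => m _; rewrite big_bool.
rewrite (reindex (fun p : bool * N.-tuple bool => cons_tuple p.1 p.2)) //.
exists (fun m : N.+1.-tuple bool => (thead m, behead_tuple m)).
  by move=> [b m] _ /=; rewrite theadE; congr pair; apply: val_inj.
by move=> m _ /=; rewrite [RHS]tuple_eta; apply: val_inj.
Qed.

Lemma all_mask_split (T : Type) (p : pred T) (m : seq bool) (t : seq T) :
  size m = size t ->
  all p (mask m t) && all p (mask (map negb m) t) = all p t.
Proof.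
elim: t m => [|x t IH] [|b m] //= [/IH] {}IH.
by case: b => /=; case: (p x) => /=; rewrite -?IH ?andbF // andbC.
Qed.

Section PowerSeries.
Variables (K : fieldType) (n : nat).
Implicit Types (A F G : pseries K n) (H : 'I_n.+1 -> pseries K n) (t : seq (jvar n)).

Definition lambda0_var (v : jvar n) := (jv_desc v == 0%N) && (jv_jet v == 0%N).
Definition dz_lambda0_var (v : jvar n) := (jv_desc v == 0%N) && (jv_jet v == 1%N).

Definition lambda0_series F := forall t, ~~ all lambda0_var t -> F t = 0.

(** [dz_comb H] is the series [sum_c (d_z lambda^c_0) * H c]. *)
Definition dz_comb H : pseries K n := fun s =>
  \sum_(i < size s)
    let v := nth (ord0, 0%N, 0%N) s i in
    if dz_lambda0_var v then H (jv_ind v) (rem_at i s) else 0.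

Lemma ps_mul_cons F G x t :
  ps_mul F G (x :: t) = ps_mul (ps_pd x F) G t + ps_mul F (ps_pd x G) t.
Proof. by rewrite /ps_mul /= sum_tupleS -big_split. Qed.

Lemma eq_ps_mulr A F G t : (forall r, F r = G r) -> ps_mul A F t = ps_mul A G t.
Proof. by move=> eqFG; apply: eq_bigr => m _; rewrite eqFG. Qed.

Lemma ps_mulDr A F G t :
  ps_mul A (fun r => F r + G r) t = ps_mul A F t + ps_mul A G t.
Proof. by rewrite /ps_mul -big_split; apply: eq_bigr => m _; rewrite mulrDr. Qed.

Lemma ps_mul0r A t : ps_mul A (fun=> 0) t = 0.
Proof. by apply: big1 => m _; rewrite mulr0. Qed.

Lemma lambda0_series_pd x F : lambda0_series F -> lambda0_series (ps_pd x F).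
Proof. by move=> F0 t t0; rewrite /ps_pd F0 //= negb_and t0 orbT. Qed.

Lemma lambda0_series_mul F G :
  lambda0_series F -> lambda0_series G -> lambda0_series (ps_mul F G).
Proof.
move=> F0 G0 t t0; apply: big1 => m _.
move: t0; rewrite -(all_mask_split _ (size_tuple m)) negb_and.
by case/orP => [/F0 -> | /G0 ->]; rewrite ?mul0r ?mulr0.
Qed.

Lemma eq_dz_comb H H' t :
  (forall c r, H c r = H' c r) -> dz_comb H t = dz_comb H' t.
Proof. by move=> eqH; apply: eq_bigr => i _ /=; rewrite eqH. Qed.

Lemma dz_comb_nil H : dz_comb H [::] = 0.
Proof. exact: big_ord0. Qed.

Lemma dz_comb_cons H x t :
  dz_comb H (x :: t) =
  (if dz_lambda0_var x then H (jv_ind x) t else 0) +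
  dz_comb (fun c => ps_pd x (H c)) t.
Proof. by rewrite /dz_comb /= big_ord_recl /rem_at /= drop0. Qed.

Lemma dz_combD H H' t :
  dz_comb (fun c r => H c r + H' c r) t = dz_comb H t + dz_comb H' t.
Proof.
by rewrite /dz_comb -big_split; apply: eq_bigr => i _ /=; case: ifP; rewrite ?addr0.
Qed.

Lemma dz_combZ (w : K) H t :
  w * dz_comb H t = dz_comb (fun c r => w * H c r) t.
Proof.
by rewrite /dz_comb mulr_sumr; apply: eq_bigr => i _ /=; case: ifP; rewrite ?mulr0.
Qed.

Lemma dz_comb_sum (I : Type) (r : seq I) (H : I -> 'I_n.+1 -> pseries K n) t :
  \sum_(i <- r) dz_comb (H i) t = dz_comb (fun c s => \sum_(i <- r) H i c s) t.
Proof.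
rewrite /dz_comb exchange_big; apply: eq_bigr => j _.
by case: ifP => // _; rewrite big1.
Qed.

Lemma ps_mul_dz_comb t : forall A H,
  ps_mul A (dz_comb H) t = dz_comb (fun c => ps_mul A (H c)) t.
Proof.
elim: t => [|x t IH] A H.
  rewrite dz_comb_nil; apply: big1 => m _.
  by rewrite (tuple0 m) dz_comb_nil mulr0.
rewrite ps_mul_cons (eq_ps_mulr _ _ (dz_comb_cons H x)) ps_mulDr !IH dz_comb_cons.
rewrite (eq_dz_comb _ (fun c => ps_mul_cons A (H c) x)) dz_combD addrCA.
by congr (_ + _); case: ifP => _ //; rewrite ps_mul0r.
Qed.

Lemma ps_dz_lambda0 F :
  lambda0_series F -> ps_dz F = dz_comb (fun c => ps_pd (c, 0%N, 0%N) F).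
Proof.
move=> F0; apply: funext => s; apply: eq_bigr => i _ /=.
case: (nth _ s i) => [[c d] j]; rewrite /dz_lambda0_var /jv_ind /jv_desc /jv_jet /=.
case: j => [|j]; first by rewrite andbF.
case: (boolP ((d == 0%N) && (j == 0%N))) => [/andP[/eqP-> /eqP->] // | dj].
by rewrite /= F0 //= /lambda0_var /= negb_and dj.
Qed.

Lemma iter_opp_dz_eq0 F k t : (forall s, F s = 0) ->
  iter k (fun X => ps_opp (ps_dz X)) F t = 0.
Proof.
move=> F0; elim: k t => [|k IH] t /=; first exact: F0.
by rewrite /ps_opp /ps_dz big1 ?oppr0 // => i _; case: ifP; rewrite ?IH.
Qed.

Lemma ps_vard_lambda0 a F :
  lambda0_series F -> ps_vard a F = ps_pd (a, 0%N, 0%N) F.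
Proof.
move=> F0; apply: funext => s.
rewrite /ps_vard big_ord_recl big1 ?addr0 // => i _.
by apply: iter_opp_dz_eq0 => r; rewrite /ps_pd F0.
Qed.

End PowerSeries.

Section GenusZero.
Variables (K : fieldType) (n : nat) (corr : seq (ins n) -> K).
Hypotheses (corr_sym : corr_symmetric corr) (corr_trr : TRR corr).

Definition lambda0_ins (s : seq (jvar n)) : seq (ins n) :=
  map (fun v => (jv_ind v, 0%N)) s.

(** [Gser2 k a m b] encodes [<< O^(k)_a O^(m)_b exp(sum_c lambda^c_0 O_c) >>_0]
    in the same way as [Gser]. *)
Definition Gser2 k a m b : pseries K n := fun s =>
  if all (@lambda0_var n) s then corr ((a, k) :: (b, m) :: lambda0_ins s) else 0.

Lemma lambda0_Gser k a : lambda0_series (Gser corr k a).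
Proof. by move=> s s0; rewrite /Gser (negbTE s0). Qed.

Lemma lambda0_Gser2 k a m b : lambda0_series (Gser2 k a m b).
Proof. by move=> s s0; rewrite /Gser2 (negbTE s0). Qed.

Lemma Gser2_symmetric k a m b : ps_symmetric (Gser2 k a m b).
Proof.
move=> s t st; rewrite /Gser2 (perm_all _ st); case: ifP => // _.
by apply: corr_sym; rewrite !perm_cons perm_map.
Qed.

Lemma metric_inv_sym a b : metric_inv corr a b = metric_inv corr b a.
Proof.
have gT : (metric corr)^T = metric corr.
  apply/matrixP => i j; rewrite !mxE; apply: corr_sym.
  by rewrite (perm_catCA [:: (j, 0%N)] [:: (i, 0%N)]).
by rewrite /metric_inv -[in LHS]gT -trmx_inv mxE.
Qed.

Lemma TRR_Gser k al m be c r :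
  \sum_a \sum_b metric_inv corr a b *
     ps_mul (ps_pd (a, 0%N, 0%N) (Gser corr k al))
            (ps_pd (c, 0%N, 0%N) (ps_pd (b, 0%N, 0%N) (Gser corr m be))) r
  = ps_pd (c, 0%N, 0%N) (Gser2 k.+1 al m be) r.
Proof.
have [r0 | r0] := boolP (all (@lambda0_var n) r); last first.
  rewrite (lambda0_series_pd _ (lambda0_Gser2 _ _ _ _) r0).
  apply: big1 => a _; apply: big1 => b _.
  by rewrite lambda0_series_mul ?mulr0 //; do ?apply: lambda0_series_pd;
    apply: lambda0_Gser.
rewrite /ps_pd /Gser2 /= {1}/lambda0_var /= r0.
rewrite (@corr_sym _ [:: (al, k.+1), (c, 0%N), (be, m) & lambda0_ins r]); last first.
  by rewrite perm_cons (perm_catCA [:: (be, m)] [:: (c, 0%N)]).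
rewrite corr_trr exchange_big /=.
apply: eq_bigr => a _; apply: eq_bigr => b _.
rewrite metric_inv_sym; congr (_ * _).
rewrite /ps_mul /lambda0_ins size_map; apply: eq_bigr => mm _.
have := all_mask_split (@lambda0_var n) (size_tuple mm); rewrite r0 => /andP[m0 m1].
rewrite /Gser /= m0 m1 -!map_mask; congr (_ * _); apply: corr_sym.
by rewrite (perm_catCA [:: (be, m)] [:: (a, 0%N); (c, 0%N)]).
Qed.

Lemma bracket_Gser k al m be :
  bracket (metric_inv corr) (Gser corr k al) (Gser corr m be) =
  ps_dz (Gser2 k.+1 al m be).
Proof.
apply: funext => s; rewrite /bracket.
under eq_bigr do under eq_bigr do
  rewrite !(ps_vard_lambda0 _ (lambda0_Gser _ _))
    (ps_dz_lambda0 (lambda0_series_pd _ (lambda0_Gser _ _))) ps_mul_dz_comb dz_combZ.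
under eq_bigr do rewrite dz_comb_sum.
rewrite dz_comb_sum (ps_dz_lambda0 (lambda0_Gser2 _ _ _ _)).
by apply: eq_dz_comb => c r; rewrite -TRR_Gser.
Qed.

End GenusZero.

Unset Implicit Arguments.
Theorem mainTheorem8 (R : realType) (n : nat) (corr : seq (ins n) -> R[i])
  (Hcorr : genus_zero_data corr) :
  forall (k m : nat) (a b : 'I_n.+1),
    current_bracket_zero (metric_inv corr) (Gser corr k a) (Gser corr m b).
Proof.
have [corr_sym _ _ corr_trr] := Hcorr.
move=> k m a b; exists (Gser2 corr k.+1 a m b); split.
  exact: Gser2_symmetric.
by rewrite bracket_Gser.
Qed.
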